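(* Let $n\ge3$, $r\ge2$, $2\le k\le n-1$, and let $X$ be a continuous random variable. Then both \[ E[X(n)\mid X(n-k)=u,\ X(n+r)=v]=\frac{ru+kv}{k+r}\qquad (l_F<u<v<r_F) \] and \[ E[X(n)\mid X(n-k+1)=u_2,\ X(n+r)=v]=\frac{ru_2+(k-1)v}{r+k-1}\qquad (l_F<u<u_2<v<r_F) \] hold if and only if $l_F>-\infty$, $r_F=\infty$ and $F(x)=1-e^{-c(x-l_F)}$ for $x\ge l_F$, for some constant $c>0$.
   Context: $X_1,X_2,\dots$ are i.i.d. copies of $X$ with distribution function $F$; $l_F=\inf\{x:F(x)>0\}$, $r_F=\sup\{x:F(x)<1\}$. Upper record times: $L(1)=1$, $L(m)=\min\{j>L(m-1): X_j>X_{L(m-1)}\}$; upper record values $X(m)=X_{L(m)}$. With $R(x)=-\ln(1-F(x))$, conditional expectations given $X(n-k)=u$, $X(n+r)=v$ are taken with respect to the conditional density $\frac{(k+r-1)!}{(k-1)!(r-1)!}[\frac{R(t)-R(u)}{R(v)-R(u)}]^{k-1}[\frac{R(v)-R(t)}{R(v)-R(u)}]^{r-1}\frac{R'(t)}{R(v)-R(u)}$, $u<t<v$. *)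

From Stdlib Require Import Reals Arith.
Open Scope R_scope.

Definition is_cont_dist_fun (F : R -> R) : Prop :=
  (forall x y, x <= y -> F x <= F y) /\
  (forall eps, 0 < eps -> exists M, forall x, x <= M -> Rabs (F x) < eps) /\
  (forall eps, 0 < eps -> exists M, forall x, M <= x -> Rabs (F x - 1) < eps) /\
  continuity F.

(* l_F < u, where l_F = inf {x | F x > 0} (possibly -infinity) *)
Definition lF_lt (F : R -> R) (u : R) : Prop := exists x, x < u /\ 0 < F x.
(* v < r_F, where r_F = sup {x | F x < 1} (possibly +infinity) *)
Definition lt_rF (F : R -> R) (v : R) : Prop := exists x, v < x /\ F x < 1.

(* l is the (finite) infimum of {x | F x > 0}, i.e. l = l_F > -infinity *)
Definition is_lF (F : R -> R) (l : R) : Prop :=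
  (forall x, 0 < F x -> l <= x) /\
  (forall b, (forall x, 0 < F x -> b <= x) -> b <= l).

Definition rF_infinite (F : R -> R) : Prop := forall x, F x < 1.

(* R(x) = -ln(1 - F(x)) and its derivative R'(x) = f(x)/(1 - F(x)),
   where f is the density (derivative of F). *)
Definition Rh (F : R -> R) (x : R) : R := - ln (1 - F x).
Definition Rh' (F f : R -> R) (x : R) : R := f x / (1 - F x).

(* conditional density of X(n) given X(n-k)=u, X(n+r)=v *)
Definition cond_dens (F f : R -> R) (k r : nat) (u v t : R) : R :=
  INR (Factorial.fact (k + r - 1)) / (INR (Factorial.fact (k - 1)) * INR (Factorial.fact (r - 1))) *
  ((Rh F t - Rh F u) / (Rh F v - Rh F u)) ^ (k - 1) *
  ((Rh F v - Rh F t) / (Rh F v - Rh F u)) ^ (r - 1) *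
  (Rh' F f t / (Rh F v - Rh F u)).

(* E[X(n) | X(n-k)=u, X(n+r)=v] = e : the integral of t * density over (u,v)
   exists (Riemann) and equals e. *)
Definition cond_exp_eq (F f : R -> R) (k r : nat) (u v e : R) : Prop :=
  exists pr : Riemann_integrable (fun t => t * cond_dens F f k r u v t) u v,
    RiemannInt pr = e.

(* With the hazard [R = -ln (1 - F)] and [S = R(v) - R(u)], integration by
   parts turns [E[X(n) | X(n-k) = u, X(n+r) = v] = e] into
       int_u^v B(R(t) - R(u), S) dt = (v - e) B(S, S),
   where [B(x, y) = int_0^x s^(k-1) (y - s)^(r-1) ds] is the incomplete beta
   polynomial [ibeta (r-1) (k-1) x y].  Forward direction: by the first
   identity the left-hand side is explicit in the lower end [u]; differentiating
   in [u] (a Leibniz rule, proved from uniform Taylor estimates on [ibeta] since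
   [R] is merely differentiable) yields the same integral with [k - 1] for [k],
   which the second identity evaluates.  Hence [R(v) - R(u) = R'(u) (v - u)]:
   [R] is affine on the support and [F] is exponential.  Backward direction:
   for the exponential law the conditional density is a beta density and the
   expectation follows from an antiderivative built from [ibeta]. *)

From Stdlib Require Import Reals Lra Lia Factorial RList.
From Stdlib Require Import FunctionalExtensionality ClassicalEpsilon.
Open Scope R_scope.

(** * Calculus on the reals: derivatives and a general fundamental theorem *)

(* Unfold the pointwise operations on functions ([plus_fct], [comp], ...)
   produced by the Stdlib derivative lemmas, so that [ring] sees real terms. *)
Ltac unfold_fct := unfold plus_fct, minus_fct, mult_fct, opp_fct, fct_cte, id, comp; cbv beta.

Lemma derivable_pt_lim_eq (f g : R -> R) (x l1 l2 : R) :
  (forall y, f y = g y) -> l1 = l2 ->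
  derivable_pt_lim f x l1 -> derivable_pt_lim g x l2.
Proof.
  intros Efg <- D. replace g with f by (apply functional_extensionality; auto). exact D.
Qed.

Lemma derivable_pt_lim_scal_l (f : R -> R) (x a c : R) :
  derivable_pt_lim f x a -> derivable_pt_lim (fun y => c * f y) x (c * a).
Proof.
  intro D.
  eapply derivable_pt_lim_eq;
    [| | exact (derivable_pt_lim_mult _ _ x _ _ (derivable_pt_lim_const c x) D)].
  - intro; reflexivity.
  - unfold_fct; ring.
Qed.

Lemma derivable_pt_lim_pow_comp (f : R -> R) (x a : R) (n : nat) :
  derivable_pt_lim f x a ->
  derivable_pt_lim (fun y => f y ^ n) x (INR n * f x ^ pred n * a).
Proof.
  intro D. apply (derivable_pt_lim_comp f (fun z => z ^ n)); auto.
  apply derivable_pt_lim_pow.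
Qed.

Lemma derivable_pt_lim_local (f g : R -> R) (x l d : R) : 0 < d ->
  (forall y, Rabs (y - x) < d -> f y = g y) ->
  derivable_pt_lim f x l -> derivable_pt_lim g x l.
Proof.
  intros Hd Hfg D eps Heps. destruct (D eps Heps) as [del Hdel].
  assert (Hm : 0 < Rmin del d) by (apply Rmin_pos; [apply cond_pos | lra]).
  exists (mkposreal _ Hm). intros h Hh0 Hh. simpl in Hh.
  rewrite <- (Hfg x), <- (Hfg (x + h)).
  - apply Hdel; auto. apply Rlt_le_trans with (1 := Hh), Rmin_l.
  - replace (x + h - x) with h by ring. apply Rlt_le_trans with (1 := Hh), Rmin_r.
  - rewrite Rminus_diag, Rabs_R0; lra.
Qed.

Lemma Rabs_le_between (x y : R) : Rabs x <= y -> - y <= x <= y.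
Proof. unfold Rabs. destruct (Rcase_abs x); lra. Qed.

(* If [G' = g] on [a,b] and [g] lies below a step function [phi], then the
   increment of [G] is bounded by the integral of [phi]: apply the mean value
   theorem on each step. *)
Lemma increment_le_step_integral (g G phi : R -> R) (l lf : list R) (a b : R) :
  a <= b -> adapted_couple phi a b l lf ->
  (forall t, a <= t <= b -> g t <= phi t) ->
  (forall t, a <= t <= b -> derivable_pt_lim G t (g t)) ->
  G b - G a <= Int_SF lf l.
Proof.
  revert lf a. induction l as [|r1 l IH]; intros lf a Hab Had Hg HG.
  - destruct Had as (_ & _ & _ & Hl & _). discriminate.
  - destruct l as [|r2 l].
    + destruct Had as (_ & H0 & H1 & Hl & _). simpl in H0, H1.
      rewrite Rmin_left in H0 by auto. rewrite Rmax_right in H1 by auto.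
      destruct lf; [simpl; subst; lra | discriminate].
    + destruct lf as [|r3 lf]; [destruct Had as (_ & _ & _ & Hl & _); discriminate |].
      pose proof (StepFun_P7 Hab Had) as Had2.
      destruct Had as (Hord & H0 & H1 & _ & Hc). simpl in H0.
      rewrite Rmin_left in H0 by auto. subst r1.
      assert (Hr2 : a <= r2 <= b).
      { split; [apply (Hord 0%nat); simpl; lia |].
        rewrite Rmax_right in H1 by auto. rewrite <- H1.
        apply RList_P7; auto. simpl. right. left. auto. }
      assert (Hrest : G b - G r2 <= Int_SF lf (r2 :: l)).
      { apply IH; [lra | exact Had2 | intros t Ht; apply Hg; lra | intros t Ht; apply HG; lra]. }
      assert (Hstep : G r2 - G a <= r3 * (r2 - a)).
      { destruct (Req_dec a r2) as [<- | Hne]; [lra |].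
        destruct (MVT_cor2 G g a r2) as [c [Hc1 Hc2]]; [lra | intros; apply HG; lra |].
        rewrite Hc1. apply Rmult_le_compat_r; [lra |].
        rewrite <- (Hc 0%nat); [apply Hg; lra | simpl; lia | unfold open_interval; simpl; lra]. }
      simpl. lra.
Qed.

(* Fundamental theorem of calculus for an antiderivative that is merely
   differentiable (no continuity of the derivative is assumed), provided the
   derivative is Riemann integrable. *)
Lemma RiemannInt_antiderivative (g G : R -> R) (a b : R) (pr : Riemann_integrable g a b) :
  a <= b -> (forall t, a <= t <= b -> derivable_pt_lim G t (g t)) ->
  RiemannInt pr = G b - G a.
Proof.
  intros Hab HG.
  (* one approximating pair (phi, psi) controls the increment of G *)
  assert (Approx : forall phi psi : StepFun a b,
      (forall t, Rmin a b <= t <= Rmax a b -> Rabs (g t - phi t) <= psi t) ->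
      Rabs (G b - G a - RiemannInt_SF phi) <= RiemannInt_SF psi).
  { intros phi psi H. rewrite Rmin_left, Rmax_right in H by auto.
    set (up := mkStepFun (StepFun_P28 1 phi psi)).
    set (low := mkStepFun (StepFun_P28 (-1) psi phi)).
    pose proof (StepFun_P30 1 phi psi) as Eup. pose proof (StepFun_P30 (-1) psi phi) as Elow.
    fold up in Eup. fold low in Elow.
    assert (Lup : G b - G a <= RiemannInt_SF up).
    { unfold RiemannInt_SF at 1. destruct (Rle_dec a b); [| lra].
      apply (increment_le_step_integral g G up _ _ a b Hab (StepFun_P1 up)); auto.
      intros t Ht. simpl. specialize (H t Ht). apply Rabs_le_between in H. lra. }
    assert (Llow : - G b - - G a <= RiemannInt_SF low).
    { unfold RiemannInt_SF at 1. destruct (Rle_dec a b); [| lra].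
      apply (increment_le_step_integral (fun t => - g t) (fun t => - G t) low _ _ a b Hab
               (StepFun_P1 low)).
      - intros t Ht. simpl. specialize (H t Ht). apply Rabs_le_between in H. lra.
      - intros t Ht. apply derivable_pt_lim_opp, HG, Ht. }
    apply Rabs_le. lra. }
  unfold RiemannInt. destruct (RiemannInt_exists pr RinvN RinvN_cv) as [x Hx].
  apply (UL_sequence _ _ _ Hx). intros eps Heps.
  destruct (RinvN_cv Heps) as [N HN]. exists N. intros n Hn. specialize (HN n Hn).
  destruct (phi_sequence_prop RinvN pr n) as [psi [Hp1 Hp2]].
  specialize (Approx _ _ Hp1). unfold R_dist, Rdist in *.
  rewrite Rminus_0_r, Rabs_right in HN by (left; apply cond_pos).
  rewrite Rabs_minus_sym. apply Rle_lt_trans with (1 := Approx).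
  apply Rle_lt_trans with (1 := Rle_abs _). lra.
Qed.

(** * The Riemann integral as a total function *)

(* [Rint f a b] is the Riemann integral of [f] over [a,b] when [f] is
   integrable there (and 0 otherwise); unlike [RiemannInt] it does not carry an
   integrability proof, so it can be differentiated in its bounds. *)
Definition Rint (f : R -> R) (a b : R) : R :=
  match excluded_middle_informative (exists p : Riemann_integrable f a b, True) with
  | left H => RiemannInt (proj1_sig (constructive_indefinite_description _ H))
  | right _ => 0
  end.

Lemma Rint_RiemannInt (f : R -> R) (a b : R) (pr : Riemann_integrable f a b) :
  Rint f a b = RiemannInt pr.
Proof.
  unfold Rint. destruct excluded_middle_informative as [H | H].
  - apply RiemannInt_P5.
  - exfalso. apply H. exists pr. auto.
Qed.

Lemma Rint_plus_scal (f g : R -> R) (l a b : R) :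
  Riemann_integrable f a b -> Riemann_integrable g a b ->
  Rint (fun t => f t + l * g t) a b = Rint f a b + l * Rint g a b.
Proof.
  intros pf pg.
  rewrite (Rint_RiemannInt _ _ _ pf), (Rint_RiemannInt _ _ _ pg),
    (Rint_RiemannInt _ _ _ (RiemannInt_P10 l pf pg)).
  apply RiemannInt_P13.
Qed.

Lemma Rint_scal (g : R -> R) (l a b : R) :
  Riemann_integrable g a b -> Rint (fun t => l * g t) a b = l * Rint g a b.
Proof.
  intro pg. pose proof (RiemannInt_P14 a b 0) as p0.
  replace (fun t => l * g t) with (fun t => fct_cte 0 t + l * g t)
    by (apply functional_extensionality; intro; unfold fct_cte; ring).
  rewrite Rint_plus_scal by auto.
  rewrite (Rint_RiemannInt _ _ _ p0), RiemannInt_P15. ring.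
Qed.

Lemma Rint_chasles (f : R -> R) (a b c : R) :
  Riemann_integrable f a b -> Riemann_integrable f b c ->
  Rint f a c = Rint f a b + Rint f b c.
Proof.
  intros p1 p2.
  rewrite (Rint_RiemannInt _ _ _ p1), (Rint_RiemannInt _ _ _ p2),
    (Rint_RiemannInt _ _ _ (RiemannInt_P24 p1 p2)).
  symmetry. apply RiemannInt_P26.
Qed.

Lemma Rint_ext (f g : R -> R) (a b : R) : a <= b ->
  (forall t, a <= t <= b -> f t = g t) ->
  Riemann_integrable f a b -> Rint f a b = Rint g a b.
Proof.
  intros Hab E pf.
  assert (pg : Riemann_integrable g a b).
  { refine (@Riemann_integrable_ext f g a b _ pf). intros x Hx.
    rewrite Rmin_left, Rmax_right in Hx by auto. auto. }
  rewrite (Rint_RiemannInt _ _ _ pf), (Rint_RiemannInt _ _ _ pg).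
  apply RiemannInt_P18; auto. intros; apply E; lra.
Qed.

Lemma Rint_zero (f : R -> R) (a b : R) : a <= b ->
  (forall t, a <= t <= b -> f t = 0) -> Rint f a b = 0.
Proof.
  intros Hab H. pose proof (RiemannInt_P14 a b 0) as p0.
  rewrite <- (Rint_ext (fct_cte 0) f a b Hab) by (auto; intros; rewrite H; auto).
  rewrite (Rint_RiemannInt _ _ _ p0), RiemannInt_P15. ring.
Qed.

Lemma Rint_bound (f : R -> R) (a b M : R) : Riemann_integrable f a b ->
  (forall t, Rmin a b <= t <= Rmax a b -> Rabs (f t) <= M) ->
  Rabs (Rint f a b) <= M * Rabs (b - a).
Proof.
  intros p H. rewrite (Rint_RiemannInt _ _ _ p).
  destruct (Rle_dec a b) as [Hab | Hba].
  - rewrite Rmin_left, Rmax_right in H by auto.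
    destruct (@RiemannInt_const_bound f a b (-M) M p Hab) as [H1 H2];
      [intros x Hx; apply Rabs_le_between, H; lra |].
    rewrite (Rabs_right (b - a)) by lra. apply Rabs_le; lra.
  - assert (Hba' : b <= a) by lra. pose proof (RiemannInt_P1 p) as p'.
    rewrite (RiemannInt_P8 p p'), Rabs_Ropp.
    rewrite Rmin_right, Rmax_left in H by auto.
    destruct (@RiemannInt_const_bound f b a (-M) M p' Hba') as [H1 H2];
      [intros x Hx; apply Rabs_le_between, H; lra |].
    rewrite (Rabs_left (b - a)) by lra. apply Rabs_le; lra.
Qed.

Lemma integrable_continuous_comp (G Rf : R -> R) (lo hi a b : R) : continuity G ->
  (forall t, lo <= t <= hi -> continuity_pt Rf t) ->
  lo <= Rmin a b -> Rmax a b <= hi -> Riemann_integrable (fun t => G (Rf t)) a b.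
Proof.
  intros HG HR H1 H2.
  assert (Hc : forall x, Rmin a b <= x <= Rmax a b -> continuity_pt (fun t => G (Rf t)) x).
  { intros x Hx. exact (continuity_pt_comp Rf G x (HR x ltac:(lra)) (HG _)). }
  destruct (Rle_dec a b) as [Hab | Hba].
  - rewrite Rmin_left, Rmax_right in * by auto. apply continuity_implies_RiemannInt; auto.
  - rewrite Rmin_right, Rmax_left in * by lra. apply RiemannInt_P1.
    apply continuity_implies_RiemannInt; auto. lra.
Qed.

(** * Incomplete beta polynomials *)

(* [ibeta b a x y] is the polynomial [int_0^x s^a (y - s)^b ds], defined by
   integrating by parts in the exponent [b]. *)
Fixpoint ibeta (b a : nat) (x y : R) : R :=
  match b with
  | O => x ^ S a / INR (S a)
  | S b' => (x ^ S a * (y - x) ^ S b' + INR (S b') * ibeta b' (S a) x y) / INR (S a)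
  end.

(* [ibeta_shift b a x y] is the derivative of [s |-> ibeta b a (x + s) (y + s)]
   at [s = 0], i.e. [x^a (y-x)^b + b * ibeta (b-1) a x y]. *)
Definition ibeta_shift (b a : nat) (x y : R) : R :=
  match b with
  | O => x ^ a
  | S b' => x ^ a * (y - x) ^ S b' + INR (S b') * ibeta b' a x y
  end.

Lemma INR_S_neq_0 (n : nat) : INR (S n) <> 0.
Proof. apply not_0_INR. lia. Qed.

Lemma ibeta_derivative_x (b a : nat) (y x : R) :
  derivable_pt_lim (fun z => ibeta b a z y) x (x ^ a * (y - x) ^ b).
Proof.
  revert a. induction b as [|b IH]; intro a; cbn [ibeta]; pose proof (INR_S_neq_0 a).
  - eapply derivable_pt_lim_eq;
      [| | exact (derivable_pt_lim_scal_l _ x _ (/ INR (S a))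
                    (derivable_pt_lim_pow_comp _ x 1 (S a) (derivable_pt_lim_id x)))].
    + intro; unfold_fct; unfold Rdiv; ring.
    + cbn [pred pow]. unfold_fct. field; auto.
  - eapply derivable_pt_lim_eq;
      [| | exact (derivable_pt_lim_scal_l _ x _ (/ INR (S a))
         (derivable_pt_lim_plus _ _ _ _ _
            (derivable_pt_lim_mult _ _ _ _ _
               (derivable_pt_lim_pow_comp _ x 1 (S a) (derivable_pt_lim_id x))
               (derivable_pt_lim_pow_comp (fun z => y - z) x (0 - 1) (S b)
                  (derivable_pt_lim_minus _ _ _ _ _ (derivable_pt_lim_const y x)
                     (derivable_pt_lim_id x))))
            (derivable_pt_lim_scal_l _ x _ (INR (S b)) (IH (S a)))))].
    + intro; unfold_fct; unfold Rdiv; ring.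
    + cbn [pred pow]. unfold_fct. rewrite S_INR. field. rewrite <- S_INR. auto.
Qed.

Lemma ibeta_0 (b a : nat) (y : R) : ibeta b a 0 y = 0.
Proof.
  revert a. induction b as [|b IH]; intro a; cbn [ibeta];
    [| rewrite IH]; simpl; field; apply INR_S_neq_0.
Qed.

Lemma ibeta_diag (b a : nat) (y : R) :
  ibeta b a y y = INR (fact a) * INR (fact b) / INR (fact (a + b + 1)) * y ^ (a + b + 1).
Proof.
  revert a. induction b as [|b IH]; intro a; cbn [ibeta];
    pose proof (INR_S_neq_0 a); pose proof (INR_fact_neq_0 a).
  - rewrite Nat.add_0_r, Nat.add_1_r. cbn [fact]. rewrite mult_INR. simpl INR. field; auto.
  - rewrite IH, Rminus_diag, pow_i by lia.
    replace (S a + b + 1)%nat with (a + S b + 1)%nat by lia.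
    pose proof (INR_fact_neq_0 (a + S b + 1)).
    cbn [fact]. rewrite !mult_INR. field; auto.
Qed.

(* For [a + 1] the shift derivative is again an [ibeta]: [d/ds] of the
   integral only sees the moving upper end [x + s] and the kernel's [y + s]. *)
Lemma ibeta_shift_succ (b a : nat) (x y : R) :
  ibeta_shift b (S a) x y = INR (S a) * ibeta b a x y.
Proof.
  destruct b; cbn [ibeta_shift ibeta]; [simpl pow |]; field; apply INR_S_neq_0.
Qed.

Lemma ibeta_derivative_shift (b a : nat) (x y s0 : R) :
  derivable_pt_lim (fun s => ibeta b a (x + s) (y + s)) s0 (ibeta_shift b a (x + s0) (y + s0)).
Proof.
  revert a. induction b as [|b IH]; intro a; cbn [ibeta]; pose proof (INR_S_neq_0 a);
    assert (Dx : derivable_pt_lim (fun s => x + s) s0 1)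
      by (apply (derivable_pt_lim_eq _ _ _ _ _ (fun _ => eq_refl) (Rplus_0_l 1)),
            derivable_pt_lim_plus; [apply derivable_pt_lim_const | apply derivable_pt_lim_id]).
  - eapply derivable_pt_lim_eq;
      [| | exact (derivable_pt_lim_scal_l _ s0 _ (/ INR (S a))
                    (derivable_pt_lim_pow_comp _ s0 _ (S a) Dx))].
    + intro; unfold Rdiv; ring.
    + cbn [pred pow ibeta_shift]. field; auto.
  - eapply derivable_pt_lim_eq;
      [| | exact (derivable_pt_lim_scal_l _ s0 _ (/ INR (S a))
         (derivable_pt_lim_plus _ _ _ _ _
            (derivable_pt_lim_mult _ _ _ _ _ (derivable_pt_lim_pow_comp _ s0 _ (S a) Dx)
               (derivable_pt_lim_const ((y - x) ^ S b) s0))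
            (derivable_pt_lim_scal_l _ s0 _ (INR (S b)) (IH (S a)))))].
    + intro s. unfold_fct. unfold Rdiv.
      replace (y + s - (x + s)) with (y - x) by ring. ring.
    + cbn [pred]. rewrite ibeta_shift_succ. cbn [ibeta_shift].
      unfold_fct.
      replace (y + s0 - (x + s0)) with (y - x) by ring. cbn [pow]. field; auto.
Qed.

Lemma ibeta_continuous (b a : nat) (y k : R) : continuity (fun x => ibeta b a (x - k) y).
Proof.
  intro x. apply derivable_continuous_pt. eexists.
  apply (derivable_pt_lim_comp (fun x => x - k) (fun z => ibeta b a z y)).
  - apply (derivable_pt_lim_minus _ _ x _ _ (derivable_pt_lim_id x) (derivable_pt_lim_const k x)).
  - apply ibeta_derivative_x.
Qed.

Lemma ibeta_diag_derivative (b a : nat) (y : R) :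
  derivable_pt_lim (fun z => ibeta b a z z) y (ibeta_shift b a y y).
Proof.
  eapply derivable_pt_lim_eq; [| | exact (ibeta_derivative_shift b a 0 0 y)].
  - intro. cbv beta. rewrite Rplus_0_l. reflexivity.
  - rewrite !Rplus_0_l. reflexivity.
Qed.

Lemma ibeta_diag_succ (b a : nat) (y : R) :
  ibeta b (S a) y y = INR (S a) / INR (a + b + 2) * y * ibeta b a y y.
Proof.
  rewrite !ibeta_diag. replace (S a + b + 1)%nat with (S (a + b + 1)) by lia.
  replace (a + b + 2)%nat with (S (a + b + 1)) by lia.
  cbn [fact pow]. rewrite !mult_INR.
  pose proof (INR_fact_neq_0 (a + b + 1)). pose proof (INR_S_neq_0 (a + b + 1)).
  field. auto.
Qed.

Lemma ibeta_diag_pos (b a : nat) (y : R) : 0 < y -> 0 < ibeta b a y y.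
Proof.
  intro Hy. rewrite ibeta_diag. pose proof (lt_0_INR _ (lt_O_fact a)).
  pose proof (lt_0_INR _ (lt_O_fact b)). pose proof (lt_0_INR _ (lt_O_fact (a + b + 1))).
  pose proof (pow_lt y (a + b + 1) Hy).
  apply Rmult_lt_0_compat; [apply Rdiv_lt_0_compat |]; nra.
Qed.

Definition bounded_on_square (B : R) (f : R -> R -> R) : Prop :=
  exists C, forall x y, Rabs x <= B -> Rabs y <= B -> Rabs (f x y) <= C.

Lemma bounded_const (B c : R) : bounded_on_square B (fun _ _ => c).
Proof. exists (Rabs c). intros; lra. Qed.

Lemma bounded_fst (B : R) : bounded_on_square B (fun x _ => x).
Proof. exists B. auto. Qed.

Lemma bounded_snd (B : R) : bounded_on_square B (fun _ y => y).
Proof. exists B. auto. Qed.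

Lemma bounded_plus (B : R) (f g : R -> R -> R) : bounded_on_square B f ->
  bounded_on_square B g -> bounded_on_square B (fun x y => f x y + g x y).
Proof.
  intros [C1 H1] [C2 H2]. exists (C1 + C2). intros x y Hx Hy.
  eapply Rle_trans; [apply Rabs_triang |].
  specialize (H1 x y Hx Hy). specialize (H2 x y Hx Hy). lra.
Qed.

Lemma bounded_mult (B : R) (f g : R -> R -> R) : bounded_on_square B f ->
  bounded_on_square B g -> bounded_on_square B (fun x y => f x y * g x y).
Proof.
  intros [C1 H1] [C2 H2]. exists (Rabs C1 * Rabs C2). intros x y Hx Hy.
  rewrite Rabs_mult. specialize (H1 x y Hx Hy). specialize (H2 x y Hx Hy).
  apply Rmult_le_compat; try apply Rabs_pos;
    eapply Rle_trans; eauto; apply RRle_abs.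
Qed.

Lemma bounded_minus (B : R) (f g : R -> R -> R) : bounded_on_square B f ->
  bounded_on_square B g -> bounded_on_square B (fun x y => f x y - g x y).
Proof.
  intros Hf [C H]. apply (bounded_plus B f (fun x y => - g x y) Hf).
  exists C. intros. rewrite Rabs_Ropp. auto.
Qed.

Lemma bounded_pow (B : R) (f : R -> R -> R) (n : nat) : bounded_on_square B f ->
  bounded_on_square B (fun x y => f x y ^ n).
Proof.
  intro Hf. induction n as [|n IH]; [exists 1; intros; simpl; rewrite Rabs_R1; lra |].
  apply (bounded_mult B f (fun x y => f x y ^ n)); auto.
Qed.

Lemma beta_kernel_bounded (B : R) (b a : nat) :
  bounded_on_square B (fun x y => x ^ a * (y - x) ^ b).
Proof.
  apply bounded_mult; apply bounded_pow;
    [apply bounded_fst | apply bounded_minus; [apply bounded_snd | apply bounded_fst]].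
Qed.

Lemma ibeta_bounded (B : R) (b a : nat) : bounded_on_square B (fun x y => ibeta b a x y).
Proof.
  revert a. induction b as [|b IH]; intro a; cbn [ibeta]; unfold Rdiv.
  - apply bounded_mult; [apply bounded_pow, bounded_fst | apply bounded_const].
  - apply bounded_mult; [| apply bounded_const]. apply bounded_plus.
    + apply (beta_kernel_bounded B (S b) (S a)).
    + apply bounded_mult; [apply bounded_const | apply IH].
Qed.

Lemma ibeta_shift_bounded (B : R) (b a : nat) :
  bounded_on_square B (fun x y => ibeta_shift b a x y).
Proof.
  destruct b as [|b]; cbn [ibeta_shift].
  - apply bounded_pow, bounded_fst.
  - apply bounded_plus; [apply beta_kernel_bounded |].
    apply bounded_mult; [apply bounded_const | apply ibeta_bounded].
Qed.

Lemma Rabs_between_0 (c s : R) : Rmin 0 s <= c <= Rmax 0 s -> Rabs c <= Rabs s.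
Proof.
  unfold Rmin, Rmax. destruct (Rle_dec 0 s); unfold Rabs;
    destruct (Rcase_abs c), (Rcase_abs s); lra.
Qed.

Lemma ibeta_linear_bound (B : R) (b a : nat) : exists L, 0 <= L /\
  forall x y, Rabs x <= B -> Rabs y <= B -> Rabs (ibeta b a x y) <= L * Rabs x.
Proof.
  destruct (beta_kernel_bounded B b a) as [C HC].
  exists (Rabs C). split; [apply Rabs_pos |]. intros x y Hx Hy.
  destruct (MVT_abs (fun z => ibeta b a z y) (fun z => z ^ a * (y - z) ^ b) 0 x)
    as [c [Hc1 Hc2]]; [intros; apply ibeta_derivative_x |].
  rewrite ibeta_0, !Rminus_0_r in Hc1. rewrite Hc1.
  apply Rmult_le_compat_r; [apply Rabs_pos |].
  apply Rabs_between_0 in Hc2.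
  apply Rle_trans with C; [apply HC; lra | apply RRle_abs].
Qed.

Lemma ibeta_shift_lipschitz (B : R) (b a : nat) : exists L, 0 <= L /\
  forall x y s, Rabs x <= B -> Rabs y <= B -> Rabs s <= 1 ->
  Rabs (ibeta b a (x + s) (y + s) - ibeta b a x y) <= L * Rabs s.
Proof.
  destruct (ibeta_shift_bounded (B + 1) b a) as [C HC].
  exists (Rabs C). split; [apply Rabs_pos |]. intros x y s Hx Hy Hs.
  destruct (MVT_abs (fun s => ibeta b a (x + s) (y + s))
              (fun s => ibeta_shift b a (x + s) (y + s)) 0 s) as [c [Hc1 Hc2]];
    [intros; apply ibeta_derivative_shift |].
  rewrite !Rplus_0_r, Rminus_0_r in Hc1. rewrite Hc1.
  apply Rmult_le_compat_r; [apply Rabs_pos |].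
  apply Rabs_between_0 in Hc2.
  apply Rle_trans with C; [| apply RRle_abs].
  apply HC; eapply Rle_trans; try apply Rabs_triang; lra.
Qed.

Lemma ibeta_shift_taylor (B : R) (b a : nat) : exists L, 0 <= L /\
  forall x y s, Rabs x <= B -> Rabs y <= B -> Rabs s <= 1 ->
  Rabs (ibeta b (S a) (x + s) (y + s) - ibeta b (S a) x y - s * ibeta_shift b (S a) x y)
    <= L * (s * s).
Proof.
  destruct (ibeta_shift_lipschitz B b a) as [L [HL0 HL]].
  pose proof (pos_INR (S a)) as Ha.
  exists (INR (S a) * L). split; [nra |]. intros x y s Hx Hy Hs.
  destruct (MVT_abs (fun s => ibeta b (S a) (x + s) (y + s) - s * ibeta_shift b (S a) x y)
              (fun s => ibeta_shift b (S a) (x + s) (y + s) - ibeta_shift b (S a) x y) 0 s)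
    as [c [Hc1 Hc2]].
  { intros c _. eapply derivable_pt_lim_eq;
      [| | exact (derivable_pt_lim_minus _ _ _ _ _ (ibeta_derivative_shift b (S a) x y c)
                    (derivable_pt_lim_scal_l _ c _ (ibeta_shift b (S a) x y)
                       (derivable_pt_lim_id c)))].
    - intro; unfold_fct; ring.
    - ring. }
  rewrite !Rplus_0_r, Rmult_0_l, !Rminus_0_r in Hc1.
  replace (ibeta b (S a) (x + s) (y + s) - ibeta b (S a) x y - s * ibeta_shift b (S a) x y)
    with (ibeta b (S a) (x + s) (y + s) - s * ibeta_shift b (S a) x y - ibeta b (S a) x y)
    by ring.
  rewrite Hc1, !ibeta_shift_succ, <- Rmult_minus_distr_l, !Rabs_mult, (Rabs_right (INR _))
    by lra.
  apply Rabs_between_0 in Hc2.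
  specialize (HL x y c Hx Hy ltac:(lra)).
  replace (s * s) with (Rabs s * Rabs s) by (rewrite <- Rabs_mult; apply Rabs_right; nra).
  pose proof (Rabs_pos s). pose proof (Rabs_pos (ibeta b a (x + c) (y + c) - ibeta b a x y)).
  assert (Hq : Rabs (ibeta b a (x + c) (y + c) - ibeta b a x y) <= L * Rabs s) by nra.
  rewrite Rmult_assoc, (Rmult_assoc _ L), <- (Rmult_assoc L).
  apply Rmult_le_compat_l; [lra |]. apply Rmult_le_compat_r; lra.
Qed.

(** * Differentiating an integral whose integrand depends on a parameter *)

Lemma difference_quotient_bound (Phi0 Phi1 J K h delta rho : R) : h <> 0 ->
  Rabs (Phi1 - Phi0 + delta * J) <= K * Rabs delta * (Rabs h + Rabs delta) ->
  Rabs ((Phi1 - Phi0) / h - - rho * J)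
    <= Rabs (delta / h - rho) * Rabs J + K * Rabs delta * (1 + Rabs (delta / h)).
Proof.
  intros Hh0 Hinc. set (q := delta / h). pose proof (Rabs_pos_lt h Hh0).
  assert (Hquot : Rabs ((Phi1 - Phi0) / h + q * J) <= K * Rabs delta * (1 + Rabs q)).
  { replace ((Phi1 - Phi0) / h + q * J) with ((Phi1 - Phi0 + delta * J) * / h)
      by (unfold q; field; auto).
    replace (1 + Rabs q) with ((Rabs h + Rabs delta) * / Rabs h)
      by (unfold q, Rdiv; rewrite Rabs_mult, Rabs_inv; field; lra).
    rewrite Rabs_mult, Rabs_inv, <- Rmult_assoc.
    apply Rmult_le_compat_r; [left; apply Rinv_0_lt_compat |]; lra. }
  rewrite <- Rabs_mult.
  replace ((Phi1 - Phi0) / h - - rho * J) with ((Phi1 - Phi0) / h + q * J - (q - rho) * J)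
    by ring.
  unfold Rminus at 1. rewrite <- (Rabs_Ropp ((q - rho) * J)).
  eapply Rle_trans; [apply Rabs_triang | lra].
Qed.

Lemma derivative_from_increment (Phi D : R -> R) (u rho J K d0 : R) :
  0 < d0 -> 0 <= K -> derivable_pt_lim D u rho ->
  (forall h, h <> 0 -> Rabs h < d0 -> Rabs (D (u + h) - D u) <= 1 ->
     Rabs (Phi (u + h) - Phi u + (D (u + h) - D u) * J)
       <= K * Rabs (D (u + h) - D u) * (Rabs h + Rabs (D (u + h) - D u))) ->
  derivable_pt_lim Phi u (- rho * J).
Proof.
  intros Hd0 HK HD Hinc eps Heps.
  pose proof (Rabs_pos J) as HJ. pose proof (Rabs_pos rho) as Hrho.
  set (e1 := Rmin 1 (eps / (2 * (Rabs J + 1)))).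
  assert (He1 : 0 < e1) by (apply Rmin_pos; [lra | apply Rdiv_lt_0_compat; lra]).
  set (e2 := Rmin 1 (eps / (2 * (K * (Rabs rho + 2) + 1)))).
  assert (He2 : 0 < e2) by (apply Rmin_pos; [lra | apply Rdiv_lt_0_compat; nra]).
  assert (He1a : e1 <= 1) by apply Rmin_l.
  assert (He1b : e1 <= eps / (2 * (Rabs J + 1))) by apply Rmin_r.
  assert (He2a : e2 <= 1) by apply Rmin_l.
  assert (He2b : e2 <= eps / (2 * (K * (Rabs rho + 2) + 1))) by apply Rmin_r.
  destruct (HD e1 He1) as [d1 Hd1].
  assert (Hc : continuity_pt D u) by (apply derivable_continuous_pt; exists rho; auto).
  destruct (Hc e2 He2) as [d2 [Hd2 Hd2']].
  assert (Hd : 0 < Rmin d0 (Rmin d1 d2)) by (repeat apply Rmin_pos; auto; apply cond_pos).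
  exists (mkposreal _ Hd). intros h Hh0 Hh. simpl in Hh.
  pose proof (Rmin_l d0 (Rmin d1 d2)). pose proof (Rmin_r d0 (Rmin d1 d2)).
  pose proof (Rmin_l d1 d2). pose proof (Rmin_r d1 d2).
  set (delta := D (u + h) - D u). set (q := delta / h).
  assert (Hdelta : Rabs delta < e2).
  { destruct (Req_dec (D (u + h)) (D u)) as [E | E].
    - unfold delta. rewrite E, Rminus_diag, Rabs_R0. auto.
    - apply (Hd2' (u + h)). split; [split; [exact I | intro; apply Hh0; lra] |].
      simpl. unfold Rdist. replace (u + h - u) with h by ring. lra. }
  assert (Hq : Rabs (q - rho) < e1) by (apply Hd1; auto; lra).
  specialize (Hinc h Hh0 ltac:(lra) ltac:(fold delta; lra)). fold delta in Hinc.
  pose proof (difference_quotient_bound (Phi u) (Phi (u + h)) J K h delta rho Hh0 Hinc) as Hquot.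
  fold q in Hquot.
  assert (Hqb : Rabs q <= Rabs rho + 1).
  { pose proof (Rabs_triang (q - rho) rho). replace (q - rho + rho) with q in * by ring. lra. }
  assert (T1 : Rabs (q - rho) * Rabs J <= eps / 2).
  { assert (eps / (2 * (Rabs J + 1)) * (Rabs J + 1) = eps / 2) by (field; lra).
    pose proof (Rabs_pos (q - rho)). nra. }
  assert (T2 : K * Rabs delta * (1 + Rabs q) < eps / 2).
  { assert (eps / (2 * (K * (Rabs rho + 2) + 1)) * (K * (Rabs rho + 2) + 1) = eps / 2)
      by (field; nra).
    pose proof (Rabs_pos delta). pose proof (Rabs_pos q).
    assert (K * (1 + Rabs q) <= K * (Rabs rho + 2)) by nra.
    assert (K * Rabs delta * (1 + Rabs q) <= Rabs delta * (K * (Rabs rho + 2))) by nra.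
    nra. }
  lra.
Qed.

(* [ibeta_integral Rf b a c v = int_c^v ibeta b a (Rf t - Rf c) (Rf v - Rf c) dt]:
   for [Rf = R = -ln(1-F)] this is, up to normalisation, the integral over
   [[c,v]] of the conditional distribution function of a record value. *)
Definition ibeta_integral (Rf : R -> R) (b a : nat) (c v : R) : R :=
  Rint (fun t => ibeta b a (Rf t - Rf c) (Rf v - Rf c)) c v.

Section ParametricIntegral.

Variables (Rf : R -> R) (b a : nat) (u v d0 : R).
Hypothesis d0_pos : 0 < d0.
Hypothesis u_lt_v : u < v.
Hypothesis Rf_cont : forall t, u - d0 <= t <= v -> continuity_pt Rf t.
Hypothesis Rf_mono : forall t1 t2, u - d0 <= t1 -> t1 <= t2 -> t2 <= v -> Rf t1 <= Rf t2.

Let kernel (p : nat) (c t : R) : R := ibeta b p (Rf t - Rf c) (Rf v - Rf c).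
Let shift_kernel (t : R) : R := ibeta_shift b (S a) (Rf t - Rf u) (Rf v - Rf u).
Let B : R := Rf v - Rf u + 2.

Lemma kernel_integrable (p : nat) (c a1 b1 : R) :
  u - d0 <= Rmin a1 b1 -> Rmax a1 b1 <= v -> Riemann_integrable (kernel p c) a1 b1.
Proof.
  apply (integrable_continuous_comp (fun x => ibeta b p (x - Rf c) (Rf v - Rf c)) Rf (u - d0) v);
    auto using ibeta_continuous.
Qed.

Lemma shift_kernel_integrable : Riemann_integrable shift_kernel u v.
Proof.
  refine (@Riemann_integrable_ext (fun t => INR (S a) * kernel a u t) shift_kernel u v _
            (Riemann_integrable_scal _ (kernel_integrable a u u v _ _))).
  - intros t _. unfold shift_kernel, kernel. rewrite ibeta_shift_succ. reflexivity.
  - rewrite Rmin_left; lra.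
  - rewrite Rmax_right; lra.
Qed.

Lemma small_shift_range (h : R) : Rabs h < Rmin d0 (v - u) ->
  u - d0 <= Rmin (u + h) u /\ Rmax (u + h) u <= v /\ u - d0 <= Rmin u v /\ Rmax u v <= v.
Proof.
  intro Hh. pose proof (Rmin_l d0 (v - u)). pose proof (Rmin_r d0 (v - u)).
  apply Rabs_def2 in Hh. rewrite (Rmin_left u v), (Rmax_right u v) by lra.
  unfold Rmin, Rmax. destruct Rle_dec; repeat split; lra.
Qed.

Lemma increment_decomposition (h : R) : Rabs h < Rmin d0 (v - u) ->
  ibeta_integral Rf b (S a) (u + h) v - ibeta_integral Rf b (S a) u v
    + (Rf (u + h) - Rf u) * Rint shift_kernel u v
  = Rint (kernel (S a) (u + h)) (u + h) u
    + Rint (fun t => kernel (S a) (u + h) t + -1 * kernel (S a) u t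
                     + (Rf (u + h) - Rf u) * shift_kernel t) u v.
Proof.
  intro Hh. destruct (small_shift_range h Hh) as (Hhu1 & Hhu2 & Huv1 & Huv2).
  pose proof (kernel_integrable (S a) (u + h) u v Huv1 Huv2).
  pose proof (kernel_integrable (S a) u u v Huv1 Huv2). pose proof shift_kernel_integrable.
  change (ibeta_integral Rf b (S a) (u + h) v) with (Rint (kernel (S a) (u + h)) (u + h) v).
  change (ibeta_integral Rf b (S a) u v) with (Rint (kernel (S a) u) u v).
  rewrite (Rint_chasles _ (u + h) u v) by (apply kernel_integrable; auto).
  rewrite !Rint_plus_scal by (auto; apply RiemannInt_P10; auto). ring.
Qed.

(* On [[u + h, u]] the first argument of [ibeta] is at most [|delta|], and
   [ibeta] vanishes to first order there. *)
Lemma boundary_piece_bound (Lx h : R) : 0 <= Lx ->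
  (forall x y, Rabs x <= B -> Rabs y <= B -> Rabs (ibeta b (S a) x y) <= Lx * Rabs x) ->
  Rabs h < Rmin d0 (v - u) -> Rabs (Rf (u + h) - Rf u) <= 1 ->
  Rabs (Rint (kernel (S a) (u + h)) (u + h) u) <= Lx * Rabs (Rf (u + h) - Rf u) * Rabs h.
Proof.
  intros HLx0 HLx Hh Hdl. destruct (small_shift_range h Hh) as (Hhu1 & Hhu2 & Huv1 & Huv2).
  pose proof (Rf_mono u v ltac:(lra) ltac:(lra) ltac:(lra)).
  replace (Rabs h) with (Rabs (u - (u + h)))
    by (replace (u - (u + h)) with (- h) by ring; apply Rabs_Ropp).
  apply Rint_bound; [apply kernel_integrable; auto |]. intros t Ht. unfold kernel.
  set (dl := Rf (u + h) - Rf u) in *.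
  assert (Hb1 : Rabs (Rf t - Rf (u + h)) <= Rabs dl).
  { unfold dl, Rmin, Rmax in *. destruct (Rle_dec (u + h) u).
    - pose proof (Rf_mono (u + h) t ltac:(lra) ltac:(lra) ltac:(lra)).
      pose proof (Rf_mono t u ltac:(lra) ltac:(lra) ltac:(lra)).
      unfold Rabs; destruct (Rcase_abs (Rf t - Rf (u + h))), (Rcase_abs (Rf (u + h) - Rf u)); lra.
    - pose proof (Rf_mono u t ltac:(lra) ltac:(lra) ltac:(lra)).
      pose proof (Rf_mono t (u + h) ltac:(lra) ltac:(lra) ltac:(lra)).
      unfold Rabs; destruct (Rcase_abs (Rf t - Rf (u + h))), (Rcase_abs (Rf (u + h) - Rf u)); lra. }
  eapply Rle_trans; [apply HLx; unfold B; [lra |] | apply Rmult_le_compat_l; auto].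
  replace (Rf v - Rf (u + h)) with (Rf v - Rf u - dl) by (unfold dl; ring).
  eapply Rle_trans; [apply Rabs_triang |]. rewrite Rabs_Ropp, (Rabs_right (Rf v - Rf u)) by lra.
  lra.
Qed.

(* On [[u, v]] the remainder is quadratic in [delta], by the uniform Taylor
   estimate for the diagonal shift. *)
Lemma remainder_bound (L2 h : R) :
  (forall x y s, Rabs x <= B -> Rabs y <= B -> Rabs s <= 1 ->
     Rabs (ibeta b (S a) (x + s) (y + s) - ibeta b (S a) x y - s * ibeta_shift b (S a) x y)
       <= L2 * (s * s)) ->
  Rabs h < Rmin d0 (v - u) -> Rabs (Rf (u + h) - Rf u) <= 1 ->
  Rabs (Rint (fun t => kernel (S a) (u + h) t + -1 * kernel (S a) u t
                       + (Rf (u + h) - Rf u) * shift_kernel t) u v)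
  <= L2 * ((Rf (u + h) - Rf u) * (Rf (u + h) - Rf u)) * (v - u).
Proof.
  intros HL2 Hh Hdl. destruct (small_shift_range h Hh) as (Hhu1 & Hhu2 & Huv1 & Huv2).
  set (dl := Rf (u + h) - Rf u) in *.
  rewrite <- (Rabs_right (v - u)) by lra.
  apply Rint_bound.
  { apply RiemannInt_P10; [apply RiemannInt_P10 |];
      auto using kernel_integrable, shift_kernel_integrable. }
  intros t Ht. rewrite Rmin_left, Rmax_right in Ht by lra. unfold kernel, shift_kernel.
  pose proof (Rf_mono u t ltac:(lra) ltac:(lra) ltac:(lra)).
  pose proof (Rf_mono t v ltac:(lra) ltac:(lra) ltac:(lra)).
  replace (Rf t - Rf (u + h)) with (Rf t - Rf u + - dl) by (unfold dl; ring).
  replace (Rf v - Rf (u + h)) with (Rf v - Rf u + - dl) by (unfold dl; ring).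
  replace (dl * dl) with (- dl * - dl) by ring.
  set (x := Rf t - Rf u). set (y := Rf v - Rf u).
  replace (ibeta b (S a) (x + - dl) (y + - dl) + -1 * ibeta b (S a) x y + dl * ibeta_shift b (S a) x y)
    with (ibeta b (S a) (x + - dl) (y + - dl) - ibeta b (S a) x y - - dl * ibeta_shift b (S a) x y)
    by ring.
  apply HL2; [| | rewrite Rabs_Ropp; auto]; unfold B, x, y; rewrite Rabs_right; lra.
Qed.

Lemma ibeta_integral_increment : exists K, 0 <= K /\
  forall h, h <> 0 -> Rabs h < Rmin d0 (v - u) -> Rabs (Rf (u + h) - Rf u) <= 1 ->
  Rabs (ibeta_integral Rf b (S a) (u + h) v - ibeta_integral Rf b (S a) u v
        + (Rf (u + h) - Rf u) * Rint shift_kernel u v)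
  <= K * Rabs (Rf (u + h) - Rf u) * (Rabs h + Rabs (Rf (u + h) - Rf u)).
Proof.
  destruct (ibeta_linear_bound B b (S a)) as [Lx [HLx0 HLx]].
  destruct (ibeta_shift_taylor B b a) as [L2 [HL20 HL2]].
  exists (Lx + L2 * (v - u)). split; [nra |]. intros h Hh0 Hh Hdl.
  rewrite increment_decomposition by auto.
  pose proof (boundary_piece_bound Lx h HLx0 HLx Hh Hdl) as HT1.
  pose proof (remainder_bound L2 h HL2 Hh Hdl) as HT2.
  set (dl := Rf (u + h) - Rf u) in *.
  replace (dl * dl) with (Rabs dl * Rabs dl) in HT2
    by (rewrite <- Rabs_mult; apply Rabs_right; nra).
  pose proof (Rabs_pos dl). pose proof (Rabs_pos h).
  assert (0 <= L2 * (v - u)) by nra.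
  assert (0 <= Lx * Rabs dl * Rabs dl) by (repeat apply Rmult_le_pos; auto).
  assert (0 <= L2 * (v - u) * Rabs dl * Rabs h)
    by (apply Rmult_le_pos; [apply Rmult_le_pos |]; auto).
  eapply Rle_trans; [apply Rabs_triang |]. lra.
Qed.

(* Leibniz rule: differentiating [ibeta_integral] in its lower end [u] (which
   also enters the integrand through [Rf]) only sees the shift derivative of
   the integrand, since [ibeta] vanishes on the boundary [t = u]. *)
Lemma ibeta_integral_derivative (rho : R) : derivable_pt_lim Rf u rho ->
  derivable_pt_lim (fun c => ibeta_integral Rf b (S a) c v) u
    (- rho * (INR (S a) * ibeta_integral Rf b a u v)).
Proof.
  intro HRd.
  destruct ibeta_integral_increment as [K [HK Hinc]].
  assert (Hpos : 0 < Rmin d0 (v - u)) by (apply Rmin_pos; lra).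
  replace (INR (S a) * ibeta_integral Rf b a u v) with (Rint shift_kernel u v).
  - exact (derivative_from_increment _ Rf u rho _ K _ Hpos HK HRd Hinc).
  - change (ibeta_integral Rf b a u v) with (Rint (kernel a u) u v).
    rewrite <- Rint_scal by (apply kernel_integrable; rewrite ?Rmin_left, ?Rmax_right; lra).
    apply Rint_ext; [lra | intros; apply ibeta_shift_succ | apply shift_kernel_integrable].
Qed.

End ParametricIntegral.

(** * Continuous distribution functions and the hazard function [R] *)

Definition in_support (F : R -> R) (x : R) : Prop := lF_lt F x /\ lt_rF F x.

Lemma IVT_value (F : R -> R) (x y c : R) : continuity F -> x < y -> F x < c -> c < F y ->
  exists z, x <= z <= y /\ F z = c.
Proof.
  intros HF Hxy H1 H2.
  assert (Hc : continuity (fun t => F t - c))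
    by (apply (continuity_minus F (fct_cte c)); [auto | apply derivable_continuous, derivable_const]).
  destruct (IVT (fun t => F t - c) x y Hc Hxy ltac:(lra) ltac:(lra)) as [z [Hz1 Hz2]].
  exists z. split; auto. lra.
Qed.

Lemma in_support_of_value (F : R -> R) (p : R) : continuity F -> 0 < F p < 1 -> in_support F p.
Proof.
  intros HF Hp. split.
  - destruct (HF p (F p) ltac:(lra)) as [d [Hd Hd']].
    exists (p - d / 2). split; [lra |].
    assert (H : Rabs (F (p - d / 2) - F p) < F p).
    { apply (Hd' (p - d / 2)). split; [split; [exact I | intro; lra] |]. simpl. unfold Rdist.
      replace (p - d / 2 - p) with (- (d / 2)) by ring. rewrite Rabs_Ropp, Rabs_right; lra. }
    apply Rabs_def2 in H. lra.
  - destruct (HF p (1 - F p) ltac:(lra)) as [d [Hd Hd']].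
    exists (p + d / 2). split; [lra |].
    assert (H : Rabs (F (p + d / 2) - F p) < 1 - F p).
    { apply (Hd' (p + d / 2)). split; [split; [exact I | intro; lra] |]. simpl. unfold Rdist.
      replace (p + d / 2 - p) with (d / 2) by ring. rewrite Rabs_right; lra. }
    apply Rabs_def2 in H. lra.
Qed.

Section DistributionFunction.

Variable F : R -> R.
Hypothesis HF : is_cont_dist_fun F.

Lemma F_mono (x y : R) : x <= y -> F x <= F y.
Proof. apply HF. Qed.

Lemma F_cont : continuity F.
Proof. apply HF. Qed.

Lemma F_nonneg (x : R) : 0 <= F x.
Proof.
  destruct (Rle_dec 0 (F x)) as [H | H]; auto. exfalso.
  destruct HF as (_ & Hlim & _). destruct (Hlim (- F x)) as [M HM]; [lra |].
  specialize (HM (Rmin M x) (Rmin_l _ _)). pose proof (F_mono _ _ (Rmin_r M x)).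
  apply Rabs_def2 in HM. lra.
Qed.

Lemma support_F_bounds (x : R) : in_support F x -> 0 < F x < 1.
Proof.
  intros [[w [Hw1 Hw2]] [z [Hz1 Hz2]]].
  pose proof (F_mono w x). pose proof (F_mono x z). lra.
Qed.

Lemma support_interval (x y z : R) : in_support F x -> in_support F y -> x <= z <= y ->
  in_support F z.
Proof.
  intros [[w [Hw1 Hw2]] _] [_ [r [Hr1 Hr2]]] Hz.
  split; [exists w | exists r]; split; auto; lra.
Qed.

Lemma support_open (x : R) : in_support F x ->
  exists d, 0 < d /\ forall y, x - d <= y <= x + d -> in_support F y.
Proof.
  intros [[w [Hw1 Hw2]] [r [Hr1 Hr2]]].
  exists (Rmin ((x - w) / 2) ((r - x) / 2)). split; [apply Rmin_pos; lra |].
  intros y Hy. pose proof (Rmin_l ((x - w) / 2) ((r - x) / 2)).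
  pose proof (Rmin_r ((x - w) / 2) ((r - x) / 2)).
  split; [exists w | exists r]; split; auto; lra.
Qed.

Lemma support_nonempty : exists x0, in_support F x0.
Proof.
  destruct HF as (Hm & H0 & H1 & Hc).
  destruct (H0 (1 / 2) ltac:(lra)) as [M1 HM1]. destruct (H1 (1 / 2) ltac:(lra)) as [M2 HM2].
  specialize (HM1 M1 (Rle_refl _)). specialize (HM2 M2 (Rle_refl _)).
  apply Rabs_def2 in HM1. apply Rabs_def2 in HM2.
  assert (M1 < M2) by (destruct (Rlt_le_dec M1 M2); auto; pose proof (Hm M2 M1); lra).
  destruct (IVT_value F M1 M2 (1 / 2) Hc ltac:(lra) ltac:(lra) ltac:(lra)) as [p [_ Hp]].
  exists p. apply in_support_of_value; auto. lra.
Qed.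

Lemma Rh_mono (x y : R) : in_support F x -> in_support F y -> x <= y -> Rh F x <= Rh F y.
Proof.
  intros Hx Hy Hxy. unfold Rh. apply Ropp_le_contravar.
  pose proof (support_F_bounds x Hx). pose proof (support_F_bounds y Hy). pose proof (F_mono x y Hxy).
  destruct (Req_dec (F x) (F y)) as [E | E]; [rewrite E; lra |].
  left. apply ln_increasing; lra.
Qed.

Lemma F_of_Rh (x : R) : F x < 1 -> F x = 1 - exp (- Rh F x).
Proof. intro. unfold Rh. rewrite Ropp_involutive, exp_ln by lra. ring. Qed.

Variable f : R -> R.
Hypothesis Hf : forall x, lF_lt F x -> lt_rF F x -> derivable_pt_lim F x (f x).

Lemma Rh_derivative (x : R) : in_support F x -> derivable_pt_lim (Rh F) x (Rh' F f x).
Proof.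
  intro Hx. pose proof (support_F_bounds x Hx). unfold Rh, Rh'.
  assert (D1 : derivable_pt_lim (fun y => 1 - F y) x (0 - f x))
    by (apply derivable_pt_lim_minus; [apply derivable_pt_lim_const | apply Hf; apply Hx]).
  pose proof (derivable_pt_lim_comp _ ln x _ _ D1 (derivable_pt_lim_ln (1 - F x) ltac:(lra))) as D2.
  eapply derivable_pt_lim_eq; [| | exact (derivable_pt_lim_scal_l _ x _ (-1) D2)].
  - intro; unfold_fct; ring.
  - field. lra.
Qed.

Lemma Rh_continuous (x : R) : in_support F x -> continuity_pt (Rh F) x.
Proof. intro. apply derivable_continuous_pt. exists (Rh' F f x). apply Rh_derivative; auto. Qed.

End DistributionFunction.

(** * Conditional expectations of record values *)

Lemma pow_div (x y : R) (n : nat) : y <> 0 -> (x / y) ^ n = x ^ n / y ^ n.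
Proof. intro. unfold Rdiv. rewrite Rpow_mult_distr, pow_inv. reflexivity. Qed.

Lemma cond_dens_beta_kernel (F f : R -> R) (a b : nat) (u v t : R) :
  Rh F v - Rh F u <> 0 ->
  ibeta b a (Rh F v - Rh F u) (Rh F v - Rh F u) * cond_dens F f (S a) (S b) u v t
  = (Rh F t - Rh F u) ^ a * (Rh F v - Rh F t) ^ b * Rh' F f t.
Proof.
  intro HS. set (s := Rh F v - Rh F u) in *.
  rewrite ibeta_diag. unfold cond_dens. fold s.
  replace (S a + S b - 1)%nat with (a + b + 1)%nat by lia.
  replace (S a - 1)%nat with a by lia. replace (S b - 1)%nat with b by lia.
  rewrite !pow_div, !pow_add by auto. cbn [pow].
  pose proof (INR_fact_neq_0 a). pose proof (INR_fact_neq_0 b).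
  pose proof (INR_fact_neq_0 (a + b + 1)). pose proof (pow_nonzero s a HS).
  pose proof (pow_nonzero s b HS).
  field. repeat split; auto.
Qed.

(* Integration by parts against [t]: the hypothesis [E[X(n)|..] = e] says that
   the integral over [[u,v]] of the (unnormalised) conditional distribution
   function equals [(v - e)] times the normalising beta integral. *)
Lemma cond_exp_ibeta_integral (F f : R -> R) (a b : nat) (u v e : R) :
  is_cont_dist_fun F ->
  (forall x, lF_lt F x -> lt_rF F x -> derivable_pt_lim F x (f x)) ->
  in_support F u -> in_support F v -> u < v -> Rh F u < Rh F v ->
  cond_exp_eq F f (S a) (S b) u v e ->
  ibeta_integral (Rh F) b a u v
  = (v - e) * ibeta b a (Rh F v - Rh F u) (Rh F v - Rh F u).
Proof.
  intros HF Hf Hu Hv Huv HR [pr Hpr].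
  set (s := Rh F v - Rh F u). set (c0 := ibeta b a s s).
  set (P := fun t => ibeta b a (Rh F t - Rh F u) s).
  assert (HI : forall t, u <= t <= v -> in_support F t)
    by (intros t Ht; exact (support_interval F u v t Hu Hv Ht)).
  assert (pP : Riemann_integrable P u v).
  { apply (integrable_continuous_comp (fun x => ibeta b a (x - Rh F u) s) (Rh F) u v);
      [apply ibeta_continuous | | rewrite Rmin_left | rewrite Rmax_right]; try lra.
    intros t Ht. apply (Rh_continuous F HF f Hf), HI, Ht. }
  assert (HG : forall t, u <= t <= v ->
      derivable_pt_lim (fun t => t * P t) t (P t + c0 * (t * cond_dens F f (S a) (S b) u v t))).
  { intros t Ht.
    assert (Dd : derivable_pt_lim (fun t => Rh F t - Rh F u) t (Rh' F f t - 0))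
      by (apply derivable_pt_lim_minus; [apply Rh_derivative; auto | apply derivable_pt_lim_const]).
    eapply derivable_pt_lim_eq;
      [| | exact (derivable_pt_lim_mult _ _ t _ _ (derivable_pt_lim_id t)
                    (derivable_pt_lim_comp _ (fun z => ibeta b a z s) t _ _ Dd
                       (ibeta_derivative_x b a s (Rh F t - Rh F u))))].
    - intro; reflexivity.
    - unfold P. unfold_fct.
      replace (c0 * (t * cond_dens F f (S a) (S b) u v t))
        with (t * (c0 * cond_dens F f (S a) (S b) u v t)) by ring.
      unfold c0, s. rewrite cond_dens_beta_kernel by lra. fold s.
      replace (s - (Rh F t - Rh F u)) with (Rh F v - Rh F t) by (unfold s; ring). ring. }
  pose proof (RiemannInt_antiderivative _ _ u v (RiemannInt_P10 c0 pP pr) (Rlt_le _ _ Huv) HG)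
    as HFTC.
  rewrite (RiemannInt_P13 pP pr), Hpr in HFTC.
  assert (Pv : P v = c0) by reflexivity.
  assert (Pu : P u = 0) by (unfold P; rewrite Rminus_diag; apply ibeta_0).
  unfold ibeta_integral. fold s. change (Rint P u v = (v - e) * c0).
  rewrite (Rint_RiemannInt _ _ _ pP).
  rewrite Pv, Pu in HFTC. fold c0. lra.
Qed.

Lemma cond_exp_degenerate (F f : R -> R) (k r : nat) (u v e : R) :
  u <= v -> Rh F u = Rh F v -> cond_exp_eq F f k r u v e -> e = 0.
Proof.
  intros Huv HR [pr Hpr]. rewrite <- Hpr, <- (Rint_RiemannInt _ _ _ pr).
  apply Rint_zero; auto. intros t Ht. unfold cond_dens.
  replace (Rh F v - Rh F u) with 0 by lra. unfold Rdiv. rewrite Rinv_0. ring.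
Qed.

(** * The two regression identities force the hazard [R] to be linear *)

Section Characterization.

(* Notation of the theorem with [k = a + 2] and [r = b + 1]. *)
Variables (F f : R -> R) (a b : nat).
Hypothesis HF : is_cont_dist_fun F.
Hypothesis Hf : forall x, lF_lt F x -> lt_rF F x -> derivable_pt_lim F x (f x).
Hypothesis regression_k : forall u v, lF_lt F u -> u < v -> lt_rF F v ->
  cond_exp_eq F f (S (S a)) (S b) u v
    ((INR (S b) * u + INR (S (S a)) * v) / (INR (S (S a)) + INR (S b))).
Hypothesis regression_k_1 : forall u u2 v, lF_lt F u -> u < u2 -> u2 < v -> lt_rF F v ->
  cond_exp_eq F f (S a) (S b) u2 v
    ((INR (S b) * u2 + INR (S a) * v) / (INR (S b) + INR (S a))).

Lemma regression_k_1_support (u v : R) : in_support F u -> u < v -> lt_rF F v ->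
  cond_exp_eq F f (S a) (S b) u v
    ((INR (S b) * u + INR (S a) * v) / (INR (S b) + INR (S a))).
Proof.
  intros [[w [Hw1 Hw2]] _] Huv Hv.
  apply (regression_k_1 ((w + u) / 2)); [exists w; split; [lra | auto] | lra | lra | auto].
Qed.

(* [R] is strictly increasing on the support: if it were constant on [[u, v]],
   the conditional expectations with lower ends [u] and [(u + v) / 2] would
   both vanish, which the first identity forbids. *)
Lemma Rh_strict (u v : R) : in_support F u -> in_support F v -> u < v -> Rh F u < Rh F v.
Proof.
  intros Hu Hv Huv.
  destruct (Rle_lt_or_eq_dec _ _ (Rh_mono F HF u v Hu Hv (Rlt_le _ _ Huv))) as [H | H]; auto.
  exfalso. set (m := (u + v) / 2).
  assert (Hm : in_support F m) by (apply (support_interval F u v); auto; unfold m; lra).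
  assert (Hm1 : Rh F m = Rh F v).
  { pose proof (Rh_mono F HF u m Hu Hm ltac:(unfold m; lra)).
    pose proof (Rh_mono F HF m v Hm Hv ltac:(unfold m; lra)). lra. }
  pose proof (cond_exp_degenerate F f _ _ u v _ (Rlt_le _ _ Huv) H
                (regression_k u v (proj1 Hu) Huv (proj2 Hv))) as E1.
  pose proof (cond_exp_degenerate F f _ _ m v _ ltac:(unfold m; lra) Hm1
                (regression_k m v (proj1 Hm) ltac:(unfold m; lra) (proj2 Hv))) as E2.
  pose proof (pos_INR a). pose proof (pos_INR b). rewrite !S_INR in E1, E2.
  unfold Rdiv in E1, E2. apply Rmult_integral in E1, E2.
  destruct E1 as [E1 | E1]; [| apply Rinv_neq_0_compat in E1; lra].
  destruct E2 as [E2 | E2]; [| apply Rinv_neq_0_compat in E2; lra].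
  unfold m in E2. nra.
Qed.

(* Near its lower end [u], [ibeta_integral] is given in closed form by the
   first identity; differentiating this closed form at [u]. *)
Lemma ibeta_integral_closed_form_derivative (u v : R) :
  in_support F u -> in_support F v -> u < v ->
  derivable_pt_lim (fun c => ibeta_integral (Rh F) b (S a) c v) u
    (- INR (S b) / (INR (S (S a)) + INR (S b))
       * ibeta b (S a) (Rh F v - Rh F u) (Rh F v - Rh F u)
     + INR (S b) * (v - u) / (INR (S (S a)) + INR (S b))
       * (ibeta_shift b (S a) (Rh F v - Rh F u) (Rh F v - Rh F u) * (0 - Rh' F f u))).
Proof.
  intros Hu Hv Huv. set (kr := INR (S (S a)) + INR (S b)).
  assert (Hkr : 0 < kr)
    by (apply Rplus_lt_le_0_compat; [apply lt_0_INR; lia | apply pos_INR]).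
  destruct (support_open F u Hu) as [d [Hd Hsd]].
  set (Q := fun c => INR (S b) * (v - c) / kr * ibeta b (S a) (Rh F v - Rh F c) (Rh F v - Rh F c)).
  apply (derivable_pt_lim_local Q _ u _ (Rmin d (v - u))); [apply Rmin_pos; lra | |].
  - intros c Hc. pose proof (Rmin_l d (v - u)). pose proof (Rmin_r d (v - u)).
    assert (Hcv : c < v) by (apply Rabs_def2 in Hc; lra).
    assert (Ic : in_support F c) by (apply Hsd; apply Rabs_def2 in Hc; lra).
    rewrite (cond_exp_ibeta_integral F f (S a) b c v _ HF Hf Ic Hv Hcv
               (Rh_strict c v Ic Hv Hcv) (regression_k c v (proj1 Ic) Hcv (proj2 Hv))).
    unfold Q, kr. field. fold kr. lra.
  - assert (DS : derivable_pt_lim (fun c => Rh F v - Rh F c) u (0 - Rh' F f u))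
      by (apply derivable_pt_lim_minus;
            [apply derivable_pt_lim_const | apply (Rh_derivative F HF f Hf u Hu)]).
    eapply derivable_pt_lim_eq;
      [| | exact (derivable_pt_lim_mult _ _ u _ _
                    (derivable_pt_lim_scal_l _ u _ (INR (S b) / kr)
                       (derivable_pt_lim_minus _ _ u _ _ (derivable_pt_lim_const v u)
                          (derivable_pt_lim_id u)))
                    (derivable_pt_lim_comp _ (fun y => ibeta b (S a) y y) u _ _ DS
                       (ibeta_diag_derivative b (S a) (Rh F v - Rh F u))))].
    + intro c. unfold Q. unfold_fct. unfold Rdiv. ring.
    + unfold_fct. unfold Rdiv. ring.
Qed.

(* Compare the closed-form derivative above with the Leibniz rule, in which the
   second identity evaluates the remaining integral. *)
Lemma Rh_increment_linear (u v : R) : in_support F u -> in_support F v -> u < v ->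
  Rh F v - Rh F u = Rh' F f u * (v - u).
Proof.
  intros Hu Hv Huv.
  destruct (support_open F u Hu) as [d [Hd Hsd]].
  assert (HI : forall c, u - d <= c <= v -> in_support F c).
  { intros c Hc. destruct (Rle_dec c u); [apply Hsd; lra | apply (support_interval F u v); auto; lra]. }
  pose proof (ibeta_integral_derivative (Rh F) b a u v d Hd Huv
                (fun t Ht => Rh_continuous F HF f Hf t (HI t Ht))
                (fun t1 t2 H1 H12 H2 => Rh_mono F HF t1 t2 (HI t1 ltac:(lra)) (HI t2 ltac:(lra)) H12)
                (Rh' F f u) (Rh_derivative F HF f Hf u Hu)) as Leibniz.
  pose proof (uniqueness_limite _ _ _ _ (ibeta_integral_closed_form_derivative u v Hu Hv Huv) Leibniz)
    as E.
  rewrite (cond_exp_ibeta_integral F f a b u v _ HF Hf Hu Hv Huv (Rh_strict u v Hu Hv Huv)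
             (regression_k_1_support u v Hu Huv (proj2 Hv))) in E.
  rewrite ibeta_shift_succ, ibeta_diag_succ in E.
  set (s := Rh F v - Rh F u) in *. set (rho := Rh' F f u) in *.
  assert (HI0 : 0 < ibeta b a s s)
    by (apply ibeta_diag_pos; unfold s; pose proof (Rh_strict u v Hu Hv Huv); lra).
  replace (a + b + 2)%nat with (S (S (a + b))) in E by lia.
  rewrite !S_INR, plus_INR in E. pose proof (pos_INR a). pose proof (pos_INR b).
  set (I0 := ibeta b a s s) in *.
  (* [E] says that [(rho (v - u) - s)] times a positive coefficient vanishes *)
  set (coef := (INR a + 1) * (INR b + 1) * I0 / ((INR a + INR b + 3) * (INR a + INR b + 2))).
  assert (Hcoef : 0 < coef)
    by (unfold coef; apply Rdiv_lt_0_compat; repeat apply Rmult_lt_0_compat; lra).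
  match type of E with ?lhs = ?rhs =>
    assert (Hdiff : lhs - rhs = coef * (rho * (v - u) - s)) by (unfold coef; field; lra) end.
  rewrite E, Rminus_diag in Hdiff. symmetry in Hdiff.
  apply Rmult_integral in Hdiff. destruct Hdiff; lra.
Qed.

End Characterization.

(** * From a linear hazard to the exponential law *)

Lemma exp_neg_antitone (c l x y : R) : 0 < c -> x <= y ->
  exp (- c * (y - l)) <= exp (- c * (x - l)).
Proof.
  intros Hc Hxy. destruct (Req_dec x y) as [<- | Hne]; [lra |].
  left. apply exp_increasing. nra.
Qed.

Lemma hazard_affine (F Rd : R -> R) : is_cont_dist_fun F ->
  (forall u v, in_support F u -> in_support F v -> u < v -> Rh F u < Rh F v) ->
  (forall u v, in_support F u -> in_support F v -> u < v -> Rh F v - Rh F u = Rd u * (v - u)) ->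
  exists x0 l c, in_support F x0 /\ 0 < c /\ forall x, in_support F x -> Rh F x = c * (x - l).
Proof.
  intros HF Hinc Hlin.
  destruct (support_nonempty F HF) as [x0 Hx0]. destruct (support_open F x0 Hx0) as [d [Hd Hsd]].
  assert (Hy : in_support F (x0 + d)) by (apply Hsd; lra).
  set (c := Rd x0).
  assert (Hc : 0 < c).
  { pose proof (Hlin x0 (x0 + d) Hx0 Hy ltac:(lra)). pose proof (Hinc x0 (x0 + d) Hx0 Hy ltac:(lra)).
    fold c in H. nra. }
  exists x0, (x0 - Rh F x0 / c), c. split; [auto | split; [auto |]].
  intros x Hx. replace (c * (x - (x0 - Rh F x0 / c))) with (Rh F x0 + c * (x - x0)) by (field; lra).
  destruct (Rtotal_order x x0) as [Hlt | [-> | Hgt]].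
  - (* the slope [Rd x] is forced to be [c] by comparing with the point [x0 + d] *)
    pose proof (Hlin x x0 Hx Hx0 Hlt) as E1.
    pose proof (Hlin x (x0 + d) Hx Hy ltac:(lra)) as E2.
    pose proof (Hlin x0 (x0 + d) Hx0 Hy ltac:(lra)) as E3. fold c in E3.
    assert (Rd x = c) by (apply (Rmult_eq_reg_r d); [nra | lra]).
    rewrite H in E1. lra.
  - ring.
  - pose proof (Hlin x0 x Hx0 Hx Hgt). fold c in H. lra.
Qed.

Section ExponentialLaw.

Variables (F : R -> R) (x0 l c : R).
Hypothesis HF : is_cont_dist_fun F.
Hypothesis Hx0 : in_support F x0.
Hypothesis c_pos : 0 < c.
Hypothesis Rh_affine : forall x, in_support F x -> Rh F x = c * (x - l).

Lemma F_exponential_on_support (x : R) : in_support F x -> F x = 1 - exp (- c * (x - l)).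
Proof.
  intro Hx. rewrite (F_of_Rh F x) by apply (support_F_bounds F HF x Hx).
  rewrite Rh_affine by auto. repeat f_equal. ring.
Qed.

(* [r_F = +oo]: otherwise [F] would jump from below [1 - exp(-c(x-l))] to 1. *)
Lemma support_unbounded_right : rF_infinite F.
Proof.
  intro x. destruct (Rlt_le_dec (F x) 1) as [H | H]; auto. exfalso.
  pose proof (support_F_bounds F HF x0 Hx0).
  assert (Hxx0 : x0 < x) by (destruct (Rlt_le_dec x0 x); auto; pose proof (F_mono F HF x x0 r); lra).
  set (q := 1 - exp (- c * (x - l))).
  assert (Hq0 : F x0 <= q).
  { rewrite F_exponential_on_support by auto. unfold q.
    pose proof (exp_neg_antitone c l x0 x c_pos ltac:(lra)). lra. }
  assert (Hq1 : q < 1) by (unfold q; pose proof (exp_pos (- c * (x - l))); lra).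
  destruct (IVT_value F x0 x ((q + 1) / 2) (F_cont F HF) Hxx0 ltac:(lra) ltac:(lra)) as [y [Hy1 Hy2]].
  assert (Iy : in_support F y) by (apply in_support_of_value; [apply F_cont, HF | lra]).
  rewrite F_exponential_on_support in Hy2 by auto.
  pose proof (exp_neg_antitone c l y x c_pos ltac:(lra)). unfold q in *. lra.
Qed.

Lemma lower_bound_of_positive (x : R) : 0 < F x -> l < x.
Proof.
  intro Hx. assert (Ix : in_support F x)
    by (apply in_support_of_value; [apply F_cont, HF | split; [auto | apply support_unbounded_right]]).
  rewrite F_exponential_on_support in Hx by auto.
  destruct (Rlt_le_dec l x) as [H | H]; auto.
  pose proof (exp_neg_antitone c l x l c_pos H).
  rewrite Rminus_diag, Rmult_0_r, exp_0 in H0. lra.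
Qed.

Lemma support_of_gt (x : R) : l < x -> in_support F x.
Proof.
  intro Hx. pose proof (F_cont F HF) as Hc. pose proof support_unbounded_right as HrF.
  destruct (Rlt_le_dec 0 (F x)) as [H0 | H0]; [apply in_support_of_value; auto |].
  (* if [F x = 0], the intermediate value [m / 2] below [F x0] yields a contradiction *)
  exfalso. pose proof (F_nonneg F HF x).
  destruct (Rle_dec x0 x) as [Hle | Hgt].
  { pose proof (F_mono F HF x0 x Hle). pose proof (support_F_bounds F HF x0 Hx0). lra. }
  set (m := 1 - exp (- c * (x - l))).
  assert (Hm : 0 < m).
  { unfold m. pose proof (exp_neg_antitone c l l x c_pos ltac:(lra)).
    assert (exp (- c * (x - l)) <> exp (- c * (l - l))) by (intro E; apply exp_inv in E; nra).
    rewrite Rminus_diag, Rmult_0_r, exp_0 in *. lra. }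
  assert (Hm1 : m <= F x0).
  { rewrite F_exponential_on_support by auto. unfold m.
    pose proof (exp_neg_antitone c l x x0 c_pos ltac:(lra)). lra. }
  destruct (IVT_value F x x0 (m / 2) Hc ltac:(lra) ltac:(lra) ltac:(lra)) as [y [Hy1 Hy2]].
  assert (Iy : in_support F y) by (apply in_support_of_value; auto; split; [lra | apply HrF]).
  rewrite F_exponential_on_support in Hy2 by auto.
  pose proof (exp_neg_antitone c l x y c_pos ltac:(lra)). unfold m in *. lra.
Qed.

Lemma exponential_law : exists lF c', is_lF F lF /\ rF_infinite F /\ 0 < c' /\
  forall x, lF <= x -> F x = 1 - exp (- c' * (x - lF)).
Proof.
  exists l, c. split; [| split; [apply support_unbounded_right | split; [auto |]]].
  - split.
    + intros x Hx. left. apply lower_bound_of_positive; auto.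
    + intros b Hb. destruct (Rle_dec b l) as [H | H]; auto. exfalso.
      pose proof (support_F_bounds F HF _ (support_of_gt ((l + b) / 2) ltac:(lra))) as Hpos.
      specialize (Hb _ (proj1 Hpos)). lra.
  - intros x Hx. destruct (Rle_lt_or_eq_dec _ _ Hx) as [H | <-].
    + apply F_exponential_on_support, support_of_gt; auto.
    + rewrite Rminus_diag, Rmult_0_r, exp_0.
      pose proof (F_nonneg F HF l). destruct (Rle_lt_or_eq_dec _ _ H) as [H0 | H0].
      * apply lower_bound_of_positive in H0. lra.
      * lra.
Qed.

End ExponentialLaw.

(** * The exponential law satisfies the regression identities *)

Section ExponentialRegression.

Variables (F f : R -> R) (l c : R).
Hypothesis Hf : forall x, lF_lt F x -> lt_rF F x -> derivable_pt_lim F x (f x).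
Hypothesis Hl : is_lF F l.
Hypothesis HrF : rF_infinite F.
Hypothesis c_pos : 0 < c.
Hypothesis F_exp : forall x, l <= x -> F x = 1 - exp (- c * (x - l)).

Lemma Rh_exponential (t : R) : l <= t -> Rh F t = c * (t - l).
Proof.
  intro Ht. unfold Rh. rewrite F_exp by auto.
  replace (1 - (1 - exp (- c * (t - l)))) with (exp (- c * (t - l))) by ring.
  rewrite ln_exp. ring.
Qed.

Lemma Rh'_exponential (t : R) : lF_lt F t -> Rh' F f t = c.
Proof.
  intro Ht. assert (Hlt : l < t) by (destruct Ht as [x [Hx1 Hx2]]; pose proof (proj1 Hl x Hx2); lra).
  assert (Hft : f t = c * exp (- c * (t - l))).
  { apply (uniqueness_limite F t); [apply Hf; [auto | exists (t + 1); split; [lra | apply HrF]] |].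
    apply (derivable_pt_lim_local (fun y => 1 - exp (- c * (y - l))) F t _ (t - l)); [lra | |].
    - intros y Hy. rewrite F_exp; [auto | apply Rabs_def2 in Hy; lra].
    - assert (D1 : derivable_pt_lim (fun y => - c * (y - l)) t (- c * (1 - 0))).
      { apply derivable_pt_lim_scal_l, derivable_pt_lim_minus;
          [apply derivable_pt_lim_id | apply derivable_pt_lim_const]. }
      eapply derivable_pt_lim_eq;
        [| | exact (derivable_pt_lim_minus _ _ t _ _ (derivable_pt_lim_const 1 t)
                      (derivable_pt_lim_comp _ exp t _ _ D1 (derivable_pt_lim_exp _)))].
      + intro; reflexivity.
      + ring. }
  unfold Rh'. rewrite Hft, F_exp by lra.
  replace (1 - (1 - exp (- c * (t - l)))) with (exp (- c * (t - l))) by ring.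
  field. apply Rgt_not_eq, exp_pos.
Qed.

Lemma cond_dens_exponential (a b : nat) (u v t : R) : lF_lt F u -> u < v -> u <= t ->
  cond_dens F f (S a) (S b) u v t = (t - u) ^ a * (v - t) ^ b / ibeta b a (v - u) (v - u).
Proof.
  intros Hu Huv Ht.
  assert (Hlu : l < u) by (destruct Hu as [x [Hx1 Hx2]]; pose proof (proj1 Hl x Hx2); lra).
  assert (Hts : lF_lt F t) by (destruct Hu as [x [Hx1 Hx2]]; exists x; split; [lra | auto]).
  assert (HS : Rh F v - Rh F u = c * (v - u)) by (rewrite !Rh_exponential by lra; ring).
  pose proof (cond_dens_beta_kernel F f a b u v t ltac:(rewrite HS; nra)) as Hk.
  rewrite HS, Rh'_exponential in Hk by auto.
  rewrite !Rh_exponential in Hk by lra.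
  replace (c * (t - l) - c * (u - l)) with (c * (t - u)) in Hk by ring.
  replace (c * (v - l) - c * (t - l)) with (c * (v - t)) in Hk by ring.
  rewrite !ibeta_diag in *. rewrite !Rpow_mult_distr in Hk.
  pose proof (pow_lt c (a + b + 1) c_pos). pose proof (pow_lt (v - u) (a + b + 1) ltac:(lra)).
  pose proof (lt_0_INR _ (lt_O_fact a)). pose proof (lt_0_INR _ (lt_O_fact b)).
  pose proof (lt_0_INR _ (lt_O_fact (a + b + 1))).
  replace (c ^ (a + b + 1)) with (c ^ a * c ^ b * c) in Hk
    by (rewrite !pow_add; ring).
  pose proof (pow_lt c a c_pos). pose proof (pow_lt c b c_pos).
  set (K := INR (fact a) * INR (fact b) / INR (fact (a + b + 1))
            * (c ^ a * c ^ b * c * (v - u) ^ (a + b + 1))) in Hk.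
  assert (HK : 0 < K)
    by (unfold K, Rdiv; repeat (apply Rmult_lt_0_compat || apply Rinv_0_lt_compat); lra).
  apply (Rmult_eq_reg_l K); [| lra]. rewrite Hk. unfold K. field. repeat split; lra.
Qed.

Lemma regression_exponential (a b : nat) (u v : R) : lF_lt F u -> u < v ->
  cond_exp_eq F f (S a) (S b) u v ((INR (S b) * u + INR (S a) * v) / (INR (S a) + INR (S b))).
Proof.
  intros Hu Huv. set (w := v - u). set (I0 := ibeta b a w w).
  assert (HI0 : 0 < I0) by (apply ibeta_diag_pos; unfold w; lra).
  set (h := fun t => t * ((t - u) ^ a * (v - t) ^ b / I0)).
  assert (Hdens : forall t, u <= t <= v -> t * cond_dens F f (S a) (S b) u v t = h t)
    by (intros t Ht; unfold h; rewrite cond_dens_exponential by (auto; lra); reflexivity).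
  assert (ph : Riemann_integrable h u v)
    by (apply continuity_implies_RiemannInt; [lra | intros; unfold h; reg; lra]).
  assert (pr : Riemann_integrable (fun t => t * cond_dens F f (S a) (S b) u v t) u v).
  { refine (@Riemann_integrable_ext h _ u v _ ph). intros x Hx.
    rewrite Rmin_left, Rmax_right in Hx by lra. symmetry; apply Hdens; auto. }
  exists pr.
  (* writing [t = (t - u) + u], an antiderivative is built from two [ibeta]s *)
  set (G := fun t => (ibeta b (S a) (t - u) w + u * ibeta b a (t - u) w) / I0).
  assert (HG : forall t, u <= t <= v ->
            derivable_pt_lim G t (t * cond_dens F f (S a) (S b) u v t)).
  { intros t Ht. rewrite Hdens by auto.
    assert (Dt : derivable_pt_lim (fun t => t - u) t (1 - 0))
      by (apply derivable_pt_lim_minus; [apply derivable_pt_lim_id | apply derivable_pt_lim_const]).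
    eapply derivable_pt_lim_eq;
      [| | exact (derivable_pt_lim_scal_l _ t _ (/ I0) (derivable_pt_lim_plus _ _ t _ _
          (derivable_pt_lim_comp _ (fun z => ibeta b (S a) z w) t _ _ Dt
             (ibeta_derivative_x b (S a) w (t - u)))
          (derivable_pt_lim_scal_l _ t _ u
             (derivable_pt_lim_comp _ (fun z => ibeta b a z w) t _ _ Dt
                (ibeta_derivative_x b a w (t - u))))))].
    - intro; unfold G; unfold_fct; unfold Rdiv; ring.
    - unfold h, w. unfold_fct. replace (v - u - (t - u)) with (v - t) by ring. cbn [pow].
      field. lra. }
  rewrite (RiemannInt_antiderivative _ G u v pr (Rlt_le _ _ Huv) HG).
  unfold G. rewrite Rminus_diag, !ibeta_0. fold w. rewrite ibeta_diag_succ. fold I0.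
  pose proof (pos_INR a). pose proof (pos_INR b).
  replace (a + b + 2)%nat with (S (S (a + b))) by lia.
  unfold w. rewrite !S_INR, plus_INR. field. repeat split; lra.
Qed.

End ExponentialRegression.

Theorem mainTheorem4 (n k r : nat) (F f : R -> R)
  (Hn : (3 <= n)%nat) (Hr : (2 <= r)%nat) (Hk1 : (2 <= k)%nat) (Hk2 : (k <= n - 1)%nat)
  (HF : is_cont_dist_fun F)
  (Hf : forall x, lF_lt F x -> lt_rF F x -> derivable_pt_lim F x (f x)) :
  ((forall u v, lF_lt F u -> u < v -> lt_rF F v ->
      cond_exp_eq F f k r u v ((INR r * u + INR k * v) / (INR k + INR r))) /\
   (forall u u2 v, lF_lt F u -> u < u2 -> u2 < v -> lt_rF F v ->
      cond_exp_eq F f (k - 1) r u2 v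
        ((INR r * u2 + INR (k - 1) * v) / (INR r + INR (k - 1)))))
  <->
  (exists lF c, is_lF F lF /\ rF_infinite F /\ 0 < c /\
     forall x, lF <= x -> F x = 1 - exp (- c * (x - lF))).
Proof.
  (* write [k = a + 2] and [r = b + 1]; the argument only needs [k >= 2], [r >= 1] *)
  destruct k as [|[|a]]; [lia | lia |]. destruct r as [|b]; [lia |].
  replace (S (S a) - 1)%nat with (S a) by lia.
  split.
  - intros [Hreg_k Hreg_k_1].
    destruct (hazard_affine F (Rh' F f) HF (Rh_strict F f a b HF Hreg_k)
                (Rh_increment_linear F f a b HF Hf Hreg_k Hreg_k_1))
      as [x0 [l [c [Hx0 [Hc Haff]]]]].
    exact (exponential_law F x0 l c HF Hx0 Hc Haff).
  - intros [l [c [Hl [HrF [Hc Hexp]]]]]. split.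
    + intros u v Hu Huv _. exact (regression_exponential F f l c Hf Hl HrF Hc Hexp (S a) b u v Hu Huv).
    + intros u u2 v [x [Hx Hx0]] Huu2 Hu2v _. rewrite (Rplus_comm (INR (S b))).
      apply (regression_exponential F f l c Hf Hl HrF Hc Hexp a b); [exists x; split |]; auto; lra.
Qed.
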